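(* Let $\Omega$, $d$ and the finite set $\mathbb{Y}\subset\Omega$ be as in the context. Given $x'_1,x'_2\in\Omega$, there exist points $y_1,\dots,y_{N}\in\mathbb{Y}$, $N=N(x'_1,x'_2)\ge1$, such that $\{x'_1,y_1,\dots,y_N,x'_2\}$ forms a zigzag in $\Omega$, i.e. $\overline{x'_1y_1}\subset\Omega$, $\overline{y_Nx'_2}\subset\Omega$, $\overline{y_iy_{i+1}}\subset\Omega$ for all $1\le i\le N-1$, and moreover $d(\overline{x'_1y_1},\partial\Omega)\ge\min\{d(x'_1,\partial\Omega),\frac d{10}\}$, $d(\overline{x'_2y_N},\partial\Omega)\ge\min\{d(x'_2,\partial\Omega),\frac d{10}\}$, and $d(\overline{y_iy_{i+1}},\partial\Omega)>\frac d{10}$ for $1\le i\le N-1$.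
   Context: $\Omega\subset\mathbb{R}^3$ is a connected bounded open set with $C^2$ boundary, $n$ the outward unit normal, $\Omega_\epsilon=\{x\in\Omega:d(x,\partial\Omega)<\epsilon\}$, $\overline{xy}=\{sx+(1-s)y:0\le s\le1\}$. There is $\delta(\Omega)>0$ such that for $0<d<\min\{1,\delta\}$ (fixed) there are $x_1^0,\dots,x_{m_1}^0\in\partial\Omega$ with $\partial\Omega\subset\bigcup_iB(x_i^0,d/8)$, and for each $i$ an orthonormal basis $\{e_i^1,e_i^2,-n(x_i^0)\}$ and a $C^2$ function $\phi_i:\mathbb{R}^2\to\mathbb{R}$ with $\phi_i(0)=0$, $\nabla\phi_i(0)=0$, $|\nabla\phi_i|<\frac1{100}$, such that in $B(x_i^0,3d)$ (open and closed) $\partial\Omega$ is the graph $\{x_i^0+u_1e_i^1+u_2e_i^2-\phi_i(u_1,u_2)n(x_i^0)\}$ and $\Omega$ is $\{u_3>\phi_i(u_1,u_2)\}$ in coordinates $x_i^0+u_1e_i^1+u_2e_i^2-u_3n(x_i^0)$, and $B(x_i^0-\frac d2n(x_i^0),\frac d2)\subset B(x_i^0,d)\cap\Omega$. Set $y_i^0:=x_i^0-\frac{3d}4n(x_i^0)$ for $1\le i\le m_1$, and let $y_{m_1+1}^0,\dots,y_{m_1+m_2}^0\in\Omega\setminus\Omega_{d/8}$ be the centers of a finite subcover, with minimal number of balls, of the cover $\{B(x,\frac d{16})\}_{x\in\Omega\setminus\Omega_{d/8}}$ of $\Omega\setminus\Omega_{d/8}$. Then $\mathbb{Y}:=\{y_i^0:1\le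 i\le m_1+m_2\}$. Such a zigzag is called a ''good zigzag'' from $x'_1$ to $x'_2$ with $N+1$ segments. *)

(* Points of R^3 are row vectors 'rV[R]_3 with the
   EUCLIDEAN norm defined below (the library norm on matrices is the max norm). *)
From HB Require Import structures.
From mathcomp Require Import all_boot all_order all_algebra.
From mathcomp Require Import all_classical all_reals all_analysis.
Set Implicit Arguments. Unset Strict Implicit. Unset Printing Implicit Defensive.
Import Order.TTheory GRing.Theory Num.Theory.
Import numFieldNormedType.Exports.
Local Open Scope classical_set_scope.
Local Open Scope ring_scope.

Section Defs.
Variable R : realType.
Notation pt := 'rV[R]_3.

Definition dot (u v : pt) : R := \sum_(k < 3) u ord0 k * v ord0 k.
Definition enorm (u : pt) : R := Num.sqrt (dot u u).

Definition eball (x : pt) (r : R) : set pt := [set z | enorm (z - x) < r].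

Definition bdry (A : set pt) : set pt := closure A `\` interior A.

Definition dist_pt (x : pt) (A : set pt) : R :=
  inf [set enorm (x - a) | a in A].
Definition dist_set (S A : set pt) : R :=
  inf [set r | exists x a, S x /\ A a /\ r = enorm (x - a)].

Definition seg (x y : pt) : set pt :=
  [set s *: x + (1 - s) *: y | s in `[0, 1]%classic].

Definition collar (O : set pt) (eps : R) : set pt :=
  [set x | O x /\ dist_pt x (bdry O) < eps].

Definition pdx (f : R * R -> R) (p : R * R) : R := derive1 (fun t => f (t, p.2)) p.1.
Definition pdy (f : R * R -> R) (p : R * R) : R := derive1 (fun t => f (p.1, t)) p.2.

Definition C1 (f : R * R -> R) : Prop :=
  continuous f /\
  (forall p : R * R, derivable (fun t => f (t, p.2)) p.1 1 /\
                     derivable (fun t => f (p.1, t)) p.2 1) /\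
  continuous (pdx f) /\ continuous (pdy f).

Definition C2 (f : R * R -> R) : Prop := C1 f /\ C1 (pdx f) /\ C1 (pdy f).

End Defs.

From HB Require Import structures.
From mathcomp Require Import all_boot all_order all_algebra.
From mathcomp Require Import all_classical all_reals all_analysis.
From mathcomp Require Import ring lra zify.
Set Implicit Arguments.
Unset Strict Implicit.
Unset Printing Implicit Defensive.

Import Order.TTheory GRing.Theory Num.Theory.
Import numFieldNormedType.Exports.
Local Open Scope classical_set_scope.
Local Open Scope ring_scope.

(* Call a point deep if it lies at distance >= d/8 from the boundary; all
   nodes of Y are deep.  A point x of Omega is joined to a node y with
   |x - y| < d by a segment staying min (d(x, dOmega), d/10) away from the
   boundary: if x is deep, y is a centre of the d/16-cover; otherwise x lies
   within d/4 of a chart centre x_i^0, y = y_i^0 sits 3d/4 below x_i^0, and the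
   height above the graph of phi_i increases along [x, y] because phi_i has
   slope < 1/100.  Two deep points at distance < 2d are joined by a segment
   staying 41d/400 > d/10 away from the boundary: in the chart of a nearby
   boundary point the height above the graph is almost concave and
   51/50-Lipschitz.  As Omega is connected and covered by the balls B(y, d),
   y in Y, a chain of such segments links the node of x'_1 to that of x'_2. *)

Section Euclidean.
Context {R : realType}.
Notation pt := 'rV[R]_3.
Implicit Types (u v w : pt) (a : R).

Lemma dotE u v :
  dot u v = u ord0 0 * v ord0 0 + u ord0 1 * v ord0 1 + u ord0 2%:R * v ord0 2%:R.
Proof.
rewrite /dot !big_ord_recr big_ord0 /= add0r.
by congr (_ * _ + _ * _ + _ * _); congr (_ ord0 _); apply/val_inj.
Qed.

Lemma dotC u v : dot u v = dot v u.
Proof. rewrite !dotE; ring. Qed.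

Lemma dotDl u v w : dot (u + v) w = dot u w + dot v w.
Proof. rewrite !dotE !mxE; ring. Qed.

Lemma dotDr u v w : dot w (u + v) = dot w u + dot w v.
Proof. rewrite !dotE !mxE; ring. Qed.

Lemma dotNl u v : dot (- u) v = - dot u v.
Proof. rewrite !dotE !mxE; ring. Qed.

Lemma dotNr u v : dot u (- v) = - dot u v.
Proof. rewrite !dotE !mxE; ring. Qed.

Lemma dotZl a u v : dot (a *: u) v = a * dot u v.
Proof. rewrite !dotE !mxE; ring. Qed.

Lemma dotZr a u v : dot u (a *: v) = a * dot u v.
Proof. rewrite !dotE !mxE; ring. Qed.

Lemma dot_ge0 u : 0 <= dot u u.
Proof. rewrite dotE; nra. Qed.

Lemma enorm_ge0 u : 0 <= enorm u.
Proof. exact: sqrtr_ge0. Qed.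

Lemma enorm_sqr u : enorm u ^+ 2 = dot u u.
Proof. by rewrite /enorm sqr_sqrtr // dot_ge0. Qed.

Lemma enorm0 : enorm (0 : pt) = 0.
Proof. by rewrite /enorm dotE !mxE !mulr0 !addr0 sqrtr0. Qed.

Lemma dot_sqr_le u v : dot u v ^+ 2 <= dot u u * dot v v.
Proof.
rewrite !dotE.
set a0 := u ord0 0; set a1 := u ord0 1; set a2 := u ord0 2%:R.
set b0 := v ord0 0; set b1 := v ord0 1; set b2 := v ord0 2%:R.
(* Lagrange's identity *)
have -> : (a0 * a0 + a1 * a1 + a2 * a2) * (b0 * b0 + b1 * b1 + b2 * b2) =
    (a0 * b0 + a1 * b1 + a2 * b2) ^+ 2 + ((a0 * b1 - a1 * b0) ^+ 2 +
    (a0 * b2 - a2 * b0) ^+ 2 + (a1 * b2 - a2 * b1) ^+ 2) by ring.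
by rewrite lerDl !addr_ge0 ?sqr_ge0.
Qed.

Lemma norm_dot_le u v : `|dot u v| <= enorm u * enorm v.
Proof.
rewrite -(ler_pXn2r (n := 2)) ?nnegrE ?normr_ge0 ?mulr_ge0 ?enorm_ge0 //.
by rewrite exprMn !enorm_sqr -normrX ger0_norm ?sqr_ge0 ?dot_sqr_le.
Qed.

Lemma enormD u v : enorm (u + v) <= enorm u + enorm v.
Proof.
rewrite -(ler_pXn2r (n := 2)) ?nnegrE ?addr_ge0 ?enorm_ge0 //.
rewrite enorm_sqr dotDl !dotDr sqrrD !enorm_sqr (dotC v u).
have := norm_dot_le u v; rewrite ler_norml => /andP[_ h]; lra.
Qed.

Lemma enormZ a u : enorm (a *: u) = `|a| * enorm u.
Proof.
rewrite /enorm dotZl dotZr mulrA sqrtrM; last by rewrite -expr2 sqr_ge0.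
by rewrite -expr2 sqrtr_sqr.
Qed.

Lemma enormN u : enorm (- u) = enorm u.
Proof. by rewrite /enorm dotNl dotNr opprK. Qed.

Lemma enormB u v : enorm (u - v) = enorm (v - u).
Proof. by rewrite -enormN opprB. Qed.

Lemma enorm_dist u v w : enorm (u - w) <= enorm (u - v) + enorm (v - w).
Proof. by have := enormD (u - v) (v - w); rewrite addrA subrK. Qed.

Lemma enorm_unit u : dot u u = 1 -> enorm u = 1.
Proof. by move=> h; rewrite /enorm h sqrtr1. Qed.

Lemma norm_dot_unit_le u v : dot v v = 1 -> `|dot u v| <= enorm u.
Proof. by move=> /enorm_unit h; apply: le_trans (norm_dot_le u v) _; rewrite h mulr1. Qed.

Lemma entry_le_enorm u (k : 'I_3) : `|u ord0 k| <= enorm u.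
Proof.
rewrite -(ler_pXn2r (n := 2)) ?nnegrE ?enorm_ge0 // real_normK ?num_real //.
rewrite enorm_sqr dotE.
have : k = 0 \/ k = 1 \/ k = 2%:R.
  by case: k => -[|[|[|//]]] hk; [left|right; left|right; right]; apply/val_inj.
by case=> [|[|]] ->; rewrite expr2; nra.
Qed.

Lemma enorm_le_entries u : enorm u <= `|u ord0 0| + `|u ord0 1| + `|u ord0 2%:R|.
Proof.
rewrite -(ler_pXn2r (n := 2)) ?nnegrE ?addr_ge0 ?enorm_ge0 // enorm_sqr dotE.
rewrite -!expr2 -(real_normK (num_real (u ord0 0))) -(real_normK (num_real (u ord0 1))).
rewrite -(real_normK (num_real (u ord0 2%:R))).
have := normr_ge0 (u ord0 0); have := normr_ge0 (u ord0 1).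
have := normr_ge0 (u ord0 2%:R); nra.
Qed.

End Euclidean.

Section Topology.
Context {R : realType}.
Notation pt := 'rV[R]_3.
Implicit Types (O : set pt) (a b x y : pt).

Lemma ball_sub_eball x (e : R) : ball x e `<=` eball x (3 * e).
Proof.
move=> y [_ /(_ ord0) xy]; apply: le_lt_trans (enorm_le_entries _) _.
rewrite !mxE -!(distrC (x ord0 _)).
by have := xy 0; have := xy 1; have := xy 2%:R; rewrite /ball /=; lra.
Qed.

Lemma eball_sub_ball x (e : R) : eball x e `<=` ball x e.
Proof.
move=> y xy; split; first exact: le_lt_trans (enorm_ge0 _) xy.
move=> i k; rewrite (ord1 i) /ball /= distrC.
by apply: le_lt_trans xy; have := entry_le_enorm (y - x) k; rewrite !mxE.
Qed.

Lemma open_eball x (r : R) : open (eball x r).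
Proof.
rewrite openE => w xw; apply/nbhs_ballP.
exists ((r - enorm (w - x)) / 3); first by rewrite /= divr_gt0 // subr_gt0.
move=> y /ball_sub_eball; rewrite mulrC divfK // /eball /= => wy.
by apply: le_lt_trans (enorm_dist _ w _) _; rewrite /eball /= in xw; lra.
Qed.

Lemma in_itv01 (s : R) : `[0, 1]%classic s <-> 0 <= s <= 1.
Proof. by rewrite /= in_itv. Qed.

Lemma seg_sym a b : seg a b = seg b a.
Proof.
suff sub (u v : pt) : seg u v `<=` seg v u by apply/seteqP; split; apply: sub.
move=> _ [s /in_itv01 s01 <-]; exists (1 - s); first by apply/in_itv01; lra.
by rewrite (_ : 1 - (1 - s) = s) 1?addrC //; ring.
Qed.

Lemma seg_left a b : seg a b a.
Proof.
exists 1; first by apply/in_itv01; rewrite ler01 lexx.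
by rewrite subrr scale0r addr0 scale1r.
Qed.

Lemma seg_right a b : seg a b b.
Proof. by rewrite seg_sym; exact: seg_left. Qed.

Lemma seg_enorm_le a b p : seg a b p -> enorm (a - p) <= enorm (a - b).
Proof.
move=> [s /in_itv01 s01 <-].
have -> : a - (s *: a + (1 - s) *: b) = (1 - s) *: (a - b).
  by apply/rowP => k; rewrite !mxE; ring.
by rewrite enormZ ger0_norm ?ler_piMl ?enorm_ge0 //; lra.
Qed.

Lemma seg_connected a b : connected (seg a b).
Proof.
apply: connected_continuous_connected; first exact: segment_connected.
apply: continuous_subspaceT => s.
by apply: cvgD; apply: cvgZl; [|apply: cvgB; [apply: cvg_cst|]]; apply: cvg_id.
Qed.

Lemma bdry_open_notin O x : open O -> bdry O x -> ~ O x.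
Proof. by move=> oO [_ nOx] Ox; apply: nOx; move: oO; rewrite openE; apply. Qed.

Lemma seg_subset_open O a b : open O -> O a ->
  (forall p, seg a b p -> ~ bdry O p) -> seg a b `<=` O.
Proof.
move=> oO Oa nbdry.
have segO : seg a b `&` O = seg a b.
  apply: seg_connected; first by exists a; split => //; exact: seg_left.
    by exists O.
  exists (closure O); first exact: closed_closure.
  apply/seteqP; split => p [sp Op]; split => //; first exact: subset_closure.
  apply: contrapT => nOp; apply: (nbdry p sp); split => //.
  by move/interior_subset.
by move=> p; rewrite -segO => -[].
Qed.

Lemma entry_le_mxnorm (u : pt) k : `|u ord0 k| <= `|u|.
Proof.
rewrite leNgt; apply/negP => lt_uk.
have : ball (0 : pt) `|u ord0 k| u by rewrite -ball_normE /ball_ /= sub0r normrN.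
by move=> [_ /(_ ord0 k)]; rewrite /ball /= mxE sub0r normrN ltxx.
Qed.

Lemma bdry_nonempty O : open O -> bounded_set O -> O !=set0 -> bdry O !=set0.
Proof.
move=> oO [M [_ OM]] [x Ox].
have bound z : O z -> `|z| <= `|M| + 1.
  by apply: OM; apply: le_lt_trans (ler_norm M) _; rewrite ltrDl.
set c := `|M| + `|x| + 2.
pose b : pt := x + c *: const_mx 1.
have nOb : ~ O b.
  move/bound; apply/negP; rewrite -ltNge; apply: lt_le_trans (entry_le_mxnorm _ 0).
  rewrite !mxE mulr1.
  have := ler_normD (x ord0 0 + c) (- x ord0 0).
  rewrite (addrC (x ord0 0)) addrK normrN ger0_norm ?addr_ge0 //.
  by have := entry_le_mxnorm x 0; rewrite /c; lra.
apply: contrapT => nbdry; apply: nOb; apply: (seg_subset_open oO Ox) (seg_right x b).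
by move=> p _ bp; apply: nbdry; exists p.
Qed.

End Topology.

Section Distance.
Context {R : realType}.
Notation pt := 'rV[R]_3.
Implicit Types (O A S : set pt) (a b p x : pt) (r c : R).

Definition far_from A r x := forall a, A a -> r <= enorm (x - a).

Lemma far_from_le A r c x : c <= r -> far_from A r x -> far_from A c x.
Proof. by move=> cr far_x a Aa; apply: le_trans cr (far_x a Aa). Qed.

Lemma far_from_notin A r x : 0 < r -> far_from A r x -> ~ A x.
Proof. by move=> r_gt0 far_x /far_x; rewrite subrr enorm0; lra. Qed.

Lemma dist_pt_le A x a : A a -> dist_pt x A <= enorm (x - a).
Proof.
move=> Aa; apply: ge_inf; last by exists a.
by exists 0 => _ [a' _ <-]; exact: enorm_ge0.
Qed.

Lemma dist_pt_ltP A x c : A !=set0 -> dist_pt x A < c ->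
  exists a, A a /\ enorm (x - a) < c.
Proof.
move=> [a0 Aa0] /inf_lt [|_ [a Aa <-] lt_c]; last by exists a.
by exists (enorm (x - a0)), a0.
Qed.

Lemma dist_pt_far A x c : c <= dist_pt x A -> far_from A c x.
Proof. by move=> c_le a Aa; apply: le_trans c_le (dist_pt_le x Aa). Qed.

Lemma far_dist_pt A x c : A !=set0 -> far_from A c x -> c <= dist_pt x A.
Proof.
move=> [a0 Aa0] far_x; apply: lb_le_inf; first by exists (enorm (x - a0)), a0.
by move=> _ [a Aa <-]; exact: far_x.
Qed.

Lemma far_dist_set S A c : S !=set0 -> A !=set0 ->
  (forall p, S p -> far_from A c p) -> c <= dist_set S A.
Proof.
move=> [p0 Sp0] [a0 Aa0] far_S; apply: lb_le_inf.
  by exists (enorm (p0 - a0)), p0, a0.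
by move=> _ [p [a [Sp [Aa ->]]]]; exact: far_S.
Qed.

Lemma open_far_bdry O x : open O -> O x -> exists2 e, 0 < e & far_from (bdry O) e x.
Proof.
move=> oO Ox; move: (oO); rewrite openE => /(_ x Ox) /nbhs_ballP [e /= e_gt0 xeO].
exists e => // q bq; rewrite leNgt; apply/negP => qe.
by apply: (bdry_open_notin oO bq); apply/xeO/eball_sub_ball; rewrite /eball /= enormB.
Qed.

Lemma open_dist_bdry_gt0 O x : open O -> bdry O !=set0 -> O x -> 0 < dist_pt x (bdry O).
Proof.
move=> oO bdry_n0 Ox; have [e e_gt0 far_x] := open_far_bdry oO Ox.
exact: lt_le_trans e_gt0 (far_dist_pt bdry_n0 far_x).
Qed.

Lemma far_bdry_eball O x r : open O -> O x -> far_from (bdry O) r x -> eball x r `<=` O.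
Proof.
move=> oO Ox far_x w xw; apply: (seg_subset_open oO Ox _ (seg_right x w)).
move=> p /seg_enorm_le xp /far_x; rewrite /eball /= enormB in xw; lra.
Qed.

Lemma far_seg_subset_dist O a b r : open O -> O a -> 0 < r -> bdry O !=set0 ->
  (forall p, seg a b p -> far_from (bdry O) r p) ->
  seg a b `<=` O /\ r <= dist_set (seg a b) (bdry O).
Proof.
move=> oO Oa r_gt0 bdry_n0 far_seg; split; last first.
  by apply: far_dist_set bdry_n0 far_seg; exists a; exact: seg_left.
by apply: seg_subset_open oO Oa _ => p /far_seg; exact: far_from_notin.
Qed.

End Distance.

Section Lipschitz.
Context {R : realType}.

Lemma lipschitz_derive1 (g : R -> R) (L : R) : (forall t, derivable g t 1) ->
  (forall t, `|derive1 g t| <= L) -> forall a b, `|g a - g b| <= L * `|a - b|.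
Proof.
move=> dg g'_le.
have dg' (t : R) : is_derive t 1 g (derive1 g t) by rewrite derive1E; exact: derivableP.
suff le_case (a b : R) : a <= b -> `|g a - g b| <= L * `|a - b|.
  move=> a b; have [/le_case //|/ltW/le_case] := leP a b.
  by rewrite (distrC (g b)) (distrC b).
move=> ab.
have [c _ gba] := MVT_segment ab (fun t _ => dg' t)
  (derivable_within_continuous (fun t _ => dg t)).
by rewrite distrC gba normrM distrC ler_wpM2r.
Qed.

Lemma lipschitz_partials (f : R * R -> R) (L : R) :
  (forall p : R * R, derivable (fun t => f (t, p.2)) p.1 1 /\
    derivable (fun t => f (p.1, t)) p.2 1) ->
  (forall p, Num.sqrt (pdx f p ^+ 2 + pdy f p ^+ 2) <= L) ->
  forall a b, `|f a - f b| <= L * (`|a.1 - b.1| + `|a.2 - b.2|).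
Proof.
move=> df grad_le [a1 a2] [b1 b2] /=.
have norm_le_sqrt (x y : R) : `|x| <= Num.sqrt (x ^+ 2 + y ^+ 2).
  by rewrite -sqrtr_sqr ler_sqrt ?lerDl ?addr_ge0 ?sqr_ge0.
have lip1 : `|f (a1, a2) - f (b1, a2)| <= L * `|a1 - b1|.
  apply: (lipschitz_derive1 (g := fun t => f (t, a2))) => t; first exact: (df (t, a2)).1.
  exact: le_trans (norm_le_sqrt _ _) (grad_le (t, a2)).
have lip2 : `|f (b1, a2) - f (b1, b2)| <= L * `|a2 - b2|.
  apply: (lipschitz_derive1 (g := fun t => f (b1, t))) => t; first exact: (df (b1, t)).2.
  by apply: le_trans (grad_le (b1, t)); rewrite addrC norm_le_sqrt.
rewrite mulrDr; apply: le_trans (lerD lip1 lip2).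
have := ler_normD (f (a1, a2) - f (b1, a2)) (f (b1, a2) - f (b1, b2)).
by rewrite addrA subrK.
Qed.

End Lipschitz.

Section GraphChart.
Context {R : realType}.
Notation pt := 'rV[R]_3.
Implicit Types (a b w v : pt) (r s t : R).
Variables (c e1 e2 n : pt) (phi : R * R -> R) (L : R).
Hypothesis phi_lip :
  forall a b : R * R, `|phi a - phi b| <= L * (`|a.1 - b.1| + `|a.2 - b.2|).

(* [u3 - phi (u1, u2)] for [w = c + u1 *: e1 + u2 *: e2 - u3 *: n]. *)
Definition height (w : pt) : R :=
  dot (w - c) (- n) - phi (dot (w - c) e1, dot (w - c) e2).

Lemma height_incr w v :
  `|height (w + v) - height w - dot v (- n)| <= L * (`|dot v e1| + `|dot v e2|).
Proof.
rewrite /height !(addrAC w v) !(dotDl (w - c)).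
set a1 := dot (w - c) e1; set a2 := dot (w - c) e2; set a3 := dot (w - c) (- n).
set v1 := dot v e1; set v2 := dot v e2.
have := phi_lip (a1 + v1, a2 + v2) (a1, a2).
rewrite /= [a1 + v1 - a1]addrC [a2 + v2 - a2]addrC !addKr.
set P := phi (a1 + v1, a2 + v2); set Q := phi (a1, a2).
have -> : a3 + dot v (- n) - P - (a3 - Q) - dot v (- n) = - (P - Q) by ring.
by rewrite normrN.
Qed.

Hypothesis n_unit : dot n n = 1.
Hypothesis e1_n : dot e1 n = 0.
Hypothesis e2_n : dot e2 n = 0.

Lemma height_addn w t : height (w + t *: n) = height w - t.
Proof.
rewrite /height !(addrAC w (t *: n)) !(dotDl (w - c)) !dotZl !dotNr n_unit.
by rewrite !(dotC n) e1_n e2_n !mulr0 !addr0; ring.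
Qed.

Hypothesis e1_unit : dot e1 e1 = 1.
Hypothesis e2_unit : dot e2 e2 = 1.
Hypothesis L_ge0 : 0 <= L.

Lemma height_lipschitz w v :
  `|height (w + v) - height w| <= (1 + 2 * L) * enorm v.
Proof.
have nN_unit : dot (- n) (- n) = 1 by rewrite dotNl dotNr opprK.
have := height_incr w v; rewrite !ler_norml => /andP[lo hi].
have := norm_dot_unit_le v nN_unit; rewrite ler_norml => /andP[lo3 hi3].
have v12 : L * (`|dot v e1| + `|dot v e2|) <= L * (2 * enorm v).
  apply: ler_wpM2l => //.
  by have := norm_dot_unit_le v e1_unit; have := norm_dot_unit_le v e2_unit; lra.
by apply/andP; split; lra.
Qed.

Lemma height_seg a b s : 0 <= s <= 1 ->
  s * height a + (1 - s) * height b - L * enorm (a - b) <=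
  height (s *: a + (1 - s) *: b).
Proof.
move=> /andP[s_ge0 s_le1].
have pa : s *: a + (1 - s) *: b = a + (1 - s) *: - (a - b).
  by apply/rowP => k; rewrite !mxE; ring.
have pb : s *: a + (1 - s) *: b = b + s *: (a - b).
  by apply/rowP => k; rewrite !mxE; ring.
have := height_incr a ((1 - s) *: - (a - b)); rewrite -pa.
have := height_incr b (s *: (a - b)); rewrite -pb.
have s'_ge0 : 0 <= 1 - s by lra.
rewrite !dotZl !dotNl !normrM !normrN (ger0_norm s_ge0) (ger0_norm s'_ge0).
set hp := height _; set d1 := dot (a - b) e1; set d2 := dot (a - b) e2.
rewrite !ler_norml => /andP[lo_b _] /andP[lo_a _].
have D_le : `|d1| + `|d2| <= 2 * enorm (a - b).
  have := norm_dot_unit_le (a - b) e1_unit.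
  by have := norm_dot_unit_le (a - b) e2_unit; lra.
have LD_ge0 : 0 <= L * (`|d1| + `|d2|) by rewrite mulr_ge0 ?addr_ge0.
have s_quarter : s * (1 - s) <= 1 / 4.
  by have := sqr_ge0 (s - 1 / 2); rewrite expr2; lra.
have := ler_wpM2l s_ge0 lo_a; have := ler_wpM2l s'_ge0 lo_b.
have := ler_wpM2r LD_ge0 s_quarter; have := ler_wpM2l L_ge0 D_le.
lra.
Qed.

Variables (O : set pt) (rho : R).
Hypothesis chart_bdry : forall w, enorm (w - c) <= rho -> bdry O w <-> height w = 0.
Hypothesis chart_in : forall w, enorm (w - c) <= rho -> O w <-> 0 < height w.

Lemma far_height a r : 0 <= r -> O a -> far_from (bdry O) r a ->
  enorm (a - c) + r <= rho -> r <= height a.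
Proof.
move=> r_ge0 Oa far_a a_in.
have h_gt0 : 0 < height a by apply: (chart_in _).1 Oa; lra.
have n_norm : enorm n = 1 by exact: enorm_unit.
rewrite leNgt; apply/negP => h_lt.
have a'_in : enorm (a + height a *: n - c) <= rho.
  rewrite addrAC; apply: le_trans (enormD _ _) _.
  by rewrite enormZ n_norm mulr1 gtr0_norm //; lra.
have bdry_a' : bdry O (a + height a *: n).
  by apply: (chart_bdry a'_in).2; rewrite height_addn subrr.
have := far_a _ bdry_a'.
by rewrite opprD addrA subrr add0r enormN enormZ n_norm mulr1 gtr0_norm //; lra.
Qed.

End GraphChart.

Section Walk.
Variables (T : Type) (P : set T) (E : T -> T -> Prop).

Definition walk a b := exists N (f : nat -> T),
  [/\ (0 < N)%N, f 0%N = a, f N.-1 = b, (forall i, (i < N)%N -> P (f i)) &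
      (forall i, (i.+1 < N)%N -> E (f i) (f i.+1))].

Lemma walk_refl a : P a -> walk a a.
Proof. by move=> Pa; exists 1%N, (fun=> a); split. Qed.

Lemma walk_end a b : walk a b -> P b.
Proof. by move=> [N [f [N_gt0 _ <- Pf _]]]; apply: Pf; rewrite prednK. Qed.

Lemma walk_snoc a b c : walk a b -> P c -> E b c -> walk a c.
Proof.
move=> [N [f [N_gt0 f0 fN Pf Ef]]] Pc Ebc.
exists N.+1, (fun k => if (k < N)%N then f k else c); split => //=.
- by rewrite N_gt0.
- by rewrite ltnn.
- by move=> i _; case: ifP => // iN; exact: Pf.
move=> i iN; rewrite ltnS in iN; rewrite iN; case: ifP => [|iN']; first exact: Ef.
have -> : i = N.-1 by lia.
by rewrite fN.
Qed.

End Walk.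

Lemma connected_reach (I : Type) (T : topologicalType) (O : set T)
    (P C : set I) (U : I -> set T) :
  connected O -> (forall y, open (U y)) -> O `<=` \bigcup_(y in P) U y ->
  (exists2 y, C y & (O `&` U y) !=set0) ->
  (forall y y' w, C y -> P y' -> O w -> U y w -> U y' w -> C y') ->
  forall w, O w -> exists2 y, C y & U y w.
Proof.
move=> cO oU coverO [y0 Cy0 [w0 [Ow0 Uw0]]] step w Ow.
pose A := \bigcup_(y in C) U y.
have OA : O `&` A = O.
  apply: cO.
  - by exists w0; split => //; exists y0.
  - by exists A => //; apply: bigcup_open.
  exists (~` \bigcup_(y in P `\` C) U y); first by rewrite closedC; apply: bigcup_open.
  apply/seteqP; split => v [Ov Av]; split => //.
    move: Av => [y Cy Uv] [y' [Py' nCy'] Uv'].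
    by apply: nCy'; exact: step Cy Py' Ov Uv Uv'.
  have [y Py Uv] := coverO v Ov.
  by have [Cy|nCy] := pselect (C y); [exists y | exfalso; apply: Av; exists y].
by move: Ow; rewrite -OA => -[_ [y Cy Uw]]; exists y.
Qed.

Section Zigzag.
Context {R : realType} {m1 m2 : nat}.
Notation pt := 'rV[R]_3.
Implicit Types (a b p q w v x y : pt) (r s : R).
Variables (O : set pt) (d : R) (x0 e1 e2 nn : 'I_m1 -> pt)
  (phi : 'I_m1 -> R * R -> R) (z : 'I_m2 -> pt).
Hypothesis oO : open O.
Hypothesis d_gt0 : 0 < d.
Hypothesis bdry_n0 : bdry O !=set0.
Hypothesis bdry_cover : forall x, bdry O x -> exists i, eball (x0 i) (d / 8) x.
Hypothesis frame : forall i,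
  dot (e1 i) (e1 i) = 1 /\ dot (e2 i) (e2 i) = 1 /\ dot (nn i) (nn i) = 1 /\
  dot (e1 i) (e2 i) = 0 /\ dot (e1 i) (nn i) = 0 /\ dot (e2 i) (nn i) = 0.
Hypothesis phi_lip : forall i (a b : R * R),
  `|phi i a - phi i b| <= 1 / 100 * (`|a.1 - b.1| + `|a.2 - b.2|).
Hypothesis chart : forall i (w : pt), enorm (w - x0 i) <= 3 * d ->
  let u1 := dot (w - x0 i) (e1 i) in
  let u2 := dot (w - x0 i) (e2 i) in
  let u3 := dot (w - x0 i) (- nn i) in
  (bdry O w <-> u3 = phi i (u1, u2)) /\ (O w <-> u3 > phi i (u1, u2)).
Hypothesis inner_ball : forall i,
  eball (x0 i - (d / 2) *: nn i) (d / 2) `<=` eball (x0 i) d `&` O.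
Hypothesis z_in : forall j, (O `\` collar O (d / 8)) (z j).
Hypothesis z_cover :
  O `\` collar O (d / 8) `<=` \bigcup_(j in [set: 'I_m2]) eball (z j) (d / 16).

Local Notation hgt i := (height (x0 i) (e1 i) (e2 i) (nn i) (phi i)).

Lemma hgt_bdry i w : enorm (w - x0 i) <= 3 * d -> bdry O w <-> hgt i w = 0.
Proof.
move=> /chart [[bdry_eq eq_bdry] _]; rewrite /height.
split => [/bdry_eq ->|/eqP]; first by rewrite subrr.
by rewrite subr_eq0 => /eqP /eq_bdry.
Qed.

Lemma hgt_in i w : enorm (w - x0 i) <= 3 * d -> O w <-> 0 < hgt i w.
Proof. by move=> /chart [_ [in_gt gt_in]]; rewrite /height subr_gt0; split. Qed.

Lemma hgt_incr i w v : `|hgt i (w + v) - hgt i w - dot v (- nn i)| <=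
  1 / 100 * (`|dot v (e1 i)| + `|dot v (e2 i)|).
Proof. exact: height_incr (phi_lip i) w v. Qed.

Lemma hgt_lipschitz i w v : `|hgt i (w + v) - hgt i w| <= 51 / 50 * enorm v.
Proof.
have [e1u [e2u [nu _]]] := frame i.
have L_ge0 : 0 <= 1 / 100 :> R by lra.
by apply: le_trans (height_lipschitz _ (phi_lip i) nu e1u e2u L_ge0 w v) _; lra.
Qed.

Lemma hgt_seg i a b s : 0 <= s <= 1 ->
  s * hgt i a + (1 - s) * hgt i b - 1 / 100 * enorm (a - b) <=
  hgt i (s *: a + (1 - s) *: b).
Proof.
move=> s01; have [e1u [e2u _]] := frame i; have L_ge0 : 0 <= 1 / 100 :> R by lra.
exact (height_seg (x0 i) (nn i) (phi_lip i) e1u e2u L_ge0 a b s01).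
Qed.

Lemma far_hgt i a r : 0 <= r -> O a -> far_from (bdry O) r a ->
  enorm (a - x0 i) + r <= 3 * d -> r <= hgt i a.
Proof.
have [_ [_ [nu [_ [e1n e2n]]]]] := frame i.
exact: (far_height nu e1n e2n (@hgt_bdry i) (@hgt_in i)).
Qed.

Definition deep a := O a /\ far_from (bdry O) (d / 8) a.

(* In the chart of a boundary point [q] near [p], [a] and [b] have height at
   least [d/8], hence [p] at least [21d/200] by almost concavity, whereas the
   Lipschitz bound gives height at most [51/50 * |p - q|] at [p]. *)
Lemma deep_seg_far a b : deep a -> deep b -> enorm (a - b) < 2 * d ->
  forall p, seg a b p -> far_from (bdry O) (41 * d / 400) p.
Proof.
move=> [Oa far_a] [Ob far_b] ab p ab_p q bq; move: (d_gt0) => d_pos.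
rewrite leNgt; apply/negP => pq.
have [i qi] := bdry_cover bq; rewrite /eball /= in qi.
have pi : enorm (p - x0 i) < 41 * d / 400 + d / 8.
  by have := enorm_dist p q (x0 i); lra.
have ap := seg_enorm_le ab_p.
have bp : enorm (b - p) <= enorm (a - b).
  by rewrite (enormB a); apply: seg_enorm_le; rewrite seg_sym.
have ha : d / 8 <= hgt i a.
  by have apx := enorm_dist a p (x0 i); apply: far_hgt => //; lra.
have hb : d / 8 <= hgt i b.
  by have bpx := enorm_dist b p (x0 i); apply: far_hgt => //; lra.
have hq : hgt i q = 0 by apply/(hgt_bdry (i := i)) => //; lra.
case: ab_p => s /in_itv01 s01 ps; have := hgt_seg i a b s01; rewrite ps.
have := hgt_lipschitz i p (q - p); rewrite (addrC p) subrK hq sub0r normrN enormB.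
move: s01 => /andP[s_ge0 s_le1]; have s'_ge0 : 0 <= 1 - s by lra.
have := ler_wpM2l s_ge0 ha; have := ler_wpM2l s'_ge0 hb.
by rewrite ler_norml; lra.
Qed.

Definition anchor i := x0 i - (3 * d / 4) *: nn i.

Lemma anchor_deep i : deep (anchor i).
Proof.
have [_ [_ [nu _]]] := frame i; move: (d_gt0) => d_pos.
set o := x0 i - (d / 2) *: nn i.
have anchor_o : enorm (anchor i - o) = d / 4.
  have -> : anchor i - o = (- (d / 4)) *: nn i.
    by apply/rowP => k; rewrite /anchor /o !mxE; field.
  by rewrite enormZ enorm_unit // mulr1 normrN gtr0_norm // divr_gt0.
have ball_o : eball o (d / 2) `<=` O by move=> w /inner_ball [].
split; first by apply: ball_o; rewrite /eball /= anchor_o; lra.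
move=> q bq; rewrite leNgt; apply/negP => q_near.
apply: bdry_open_notin oO bq _; apply: ball_o.
rewrite /eball /=; have := enorm_dist q (anchor i) o.
by rewrite (enormB q (anchor i)) anchor_o; lra.
Qed.

Lemma anchor_close i x : enorm (x - x0 i) < d / 4 -> enorm (x - anchor i) < d.
Proof.
move=> xi; move: (d_gt0) => d_pos; have [_ [_ [nu _]]] := frame i.
have -> : x - anchor i = (x - x0 i) + (3 * d / 4) *: nn i.
  by apply/rowP => k; rewrite /anchor !mxE; ring.
apply: le_lt_trans (enormD _ _) _.
by rewrite enormZ (enorm_unit nu) mulr1 gtr0_norm ?divr_gt0 ?mulr_gt0 //; lra.
Qed.

(* Seen from [x], the anchor lies at least [d/2] deeper along [- nn i] and at
   most [d/4] aside, while [phi i] has slope below [1/100]. *)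
Lemma hgt_anchor_incr i x w t : enorm (x - x0 i) < d / 4 -> 0 <= t ->
  hgt i w + t * (d / 4) <= hgt i (w + t *: (anchor i - x)).
Proof.
move=> xi t_ge0; move: (d_gt0) => d_pos.
have [e1u [e2u [nu [_ [e1n e2n]]]]] := frame i.
have anchor_dot e :
    dot (anchor i - x) e = - dot (x - x0 i) e - 3 * d / 4 * dot (nn i) e.
  by rewrite /anchor !dotE !mxE; ring.
have := hgt_incr i w (t *: (anchor i - x)).
rewrite !dotZl !anchor_dot !dotNr nu (dotC (nn i) (e1 i)) (dotC (nn i) (e2 i)) e1n e2n.
rewrite !mulr0 !subr0 !normrM !normrN (ger0_norm t_ge0) ler_norml => /andP[lo _].
have n1 := norm_dot_unit_le (x - x0 i) e1u; have n2 := norm_dot_unit_le (x - x0 i) e2u.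
have := norm_dot_unit_le (x - x0 i) nu; rewrite ler_norml => /andP[n3 _].
have k1 := ler_wpM2l t_ge0 (le_trans n1 (ltW xi)).
have k2 := ler_wpM2l t_ge0 (le_trans n2 (ltW xi)).
have n3' : - (d / 4) <= dot (x - x0 i) (nn i) by lra.
have k3 := ler_wpM2l t_ge0 n3'.
have := mulr_ge0 t_ge0 (ltW d_pos); lra.
Qed.

(* A boundary point [q] within [r] of a point [x + v] of the segment would be
   the translate by [v] of the point [q - v] of [eball x r], which lies in [O]
   and hence has positive height. *)
Lemma anchor_seg_far i x r : O x -> far_from (bdry O) r x -> r <= d / 10 ->
  enorm (x - x0 i) < d / 4 -> forall p, seg x (anchor i) p -> far_from (bdry O) r p.
Proof.
move=> Ox far_x r_le xi _ [s /in_itv01/andP[s_ge0 s_le1] <-] q bq.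
move: (d_gt0) => d_pos; rewrite leNgt; apply/negP => pq.
have s'_ge0 : 0 <= 1 - s by lra.
set v := (1 - s) *: (anchor i - x).
have p_eq : s *: x + (1 - s) *: anchor i = x + v by apply/rowP => k; rewrite !mxE; ring.
rewrite p_eq in pq.
have v_lt : enorm v < d.
  rewrite /v enormZ ger0_norm // enormB; have := anchor_close xi.
  have : (1 - s) * enorm (x - anchor i) <= enorm (x - anchor i).
    by rewrite ler_piMl ?enorm_ge0 //; lra.
  lra.
have q'x : enorm (q - v - x) < r.
  have -> : q - v - x = - (x + v - q) by apply/rowP => k; rewrite !mxE; ring.
  by rewrite enormN.
have q'_in : enorm (q - v - x0 i) < r + d / 4.
  by have := enorm_dist (q - v) x (x0 i); lra.
have q_in : enorm (q - x0 i) <= 3 * d.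
  have := enorm_dist q (q - v) (x0 i).
  have -> : q - (q - v) = v by rewrite opprB addrC subrK.
  lra.
have q'_in3 : enorm (q - v - x0 i) <= 3 * d by lra.
have hq' := (hgt_in q'_in3).1 (far_bdry_eball oO Ox far_x q'x).
have := hgt_anchor_incr (q - v) xi s'_ge0; rewrite -/v subrK (hgt_bdry q_in).1 //.
have := mulr_ge0 s'_ge0 (ltW d_pos); lra.
Qed.

Lemma near_anchor x r q0 : O x -> far_from (bdry O) r x -> r <= d / 10 ->
  bdry O q0 -> enorm (x - q0) < d / 8 ->
  exists i, enorm (x - anchor i) < d /\
            forall p, seg x (anchor i) p -> far_from (bdry O) r p.
Proof.
move=> Ox far_x r_le bq0 xq0; move: (d_gt0) => d_pos.
have [i q0i] := bdry_cover bq0; rewrite /eball /= in q0i.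
have xi : enorm (x - x0 i) < d / 4 by have := enorm_dist x q0 (x0 i); lra.
by exists i; split; [exact: anchor_close | exact: anchor_seg_far].
Qed.

Lemma deep_dist x : O x -> d / 8 <= dist_pt x (bdry O) -> deep x.
Proof. by move=> Ox /dist_pt_far. Qed.

Lemma z_deep j : deep (z j).
Proof.
have [Oz not_collar] := z_in j; apply: deep_dist => //.
by rewrite leNgt; apply/negP => near; apply: not_collar.
Qed.

Definition nodes := [set y | (exists i, y = anchor i) \/ (exists j, y = z j)].

Lemma nodes_deep y : nodes y -> deep y.
Proof. by case=> [[i ->]|[j ->]]; [exact: anchor_deep | exact: z_deep]. Qed.

Definition edge a b := seg a b `<=` O /\ d / 10 < dist_set (seg a b) (bdry O).

Lemma deep_edge a b : deep a -> deep b -> enorm (a - b) < 2 * d -> edge a b.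
Proof.
move=> da db ab; move: (d_gt0) => d_pos.
have [|segO dist_ge] := far_seg_subset_dist oO da.1 _ bdry_n0 (deep_seg_far da db ab).
  by rewrite !divr_gt0 ?mulr_gt0.
by split => //; lra.
Qed.

Lemma start_node x : O x -> exists2 y, nodes y & eball y d x /\ seg x y `<=` O /\
  Num.min (dist_pt x (bdry O)) (d / 10) <= dist_set (seg x y) (bdry O).
Proof.
move=> Ox; move: (d_gt0) => d_pos; set r := Num.min _ _.
have r_gt0 : 0 < r by rewrite lt_min open_dist_bdry_gt0 //= divr_gt0.
have r_le : r <= d / 10 by rewrite ge_min lexx orbT.
have far_x : far_from (bdry O) r x by apply: dist_pt_far; rewrite ge_min lexx.
suff [y Yy [xy far_seg]] : exists2 y, nodes y &
    eball y d x /\ forall p, seg x y p -> far_from (bdry O) r p.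
  by exists y => //; split => //; exact: far_seg_subset_dist.
have [near|far] := ltP (dist_pt x (bdry O)) (d / 8).
  have [q0 [bq0 xq0]] := dist_pt_ltP bdry_n0 near.
  have [i [xi far_seg]] := near_anchor Ox far_x r_le bq0 xq0.
  by exists (anchor i); [left; exists i | split].
have x_in : (O `\` collar O (d / 8)) x by split => // -[_]; rewrite ltNge far.
have [j _ zx] := z_cover x_in; rewrite /eball /= in zx.
exists (z j); first by right; exists j.
split; first by rewrite /eball /=; lra.
move=> p xp; apply: far_from_le (deep_seg_far (deep_dist Ox far) (z_deep j) _ xp); lra.
Qed.

Lemma zigzag x1 x2 : connected O -> O x1 -> O x2 ->
  exists (N : nat) (y : nat -> pt),
    (0 < N)%N /\
    (forall i, (i < N)%N -> nodes (y i)) /\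
    seg x1 (y 0%N) `<=` O /\
    seg (y N.-1) x2 `<=` O /\
    (forall i, (i.+1 < N)%N -> seg (y i) (y i.+1) `<=` O) /\
    dist_set (seg x1 (y 0%N)) (bdry O) >= Num.min (dist_pt x1 (bdry O)) (d / 10) /\
    dist_set (seg (y N.-1) x2) (bdry O) >= Num.min (dist_pt x2 (bdry O)) (d / 10) /\
    (forall i, (i.+1 < N)%N -> dist_set (seg (y i) (y i.+1)) (bdry O) > d / 10).
Proof.
move=> cO Ox1 Ox2.
have [y1 Yy1 [x1y1 [seg1 dist1]]] := start_node Ox1.
have [y2 Yy2 [x2y2 [seg2 dist2]]] := start_node Ox2.
have step y y' w : walk nodes edge y1 y -> nodes y' -> O w ->
    eball y d w -> eball y' d w -> walk nodes edge y1 y'.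
  move=> y1y Yy' _ yw y'w.
  have yy' : enorm (y - y') < 2 * d.
    rewrite /eball /= in yw y'w.
    by have := enorm_dist y w y'; rewrite (enormB y w); lra.
  have := deep_edge (nodes_deep (walk_end y1y)) (nodes_deep Yy') yy'.
  exact: walk_snoc y1y Yy'.
have cover : O `<=` \bigcup_(y in nodes) eball y d.
  by move=> w /start_node [y Yy [wy _]]; exists y.
have start : exists2 y, walk nodes edge y1 y & (O `&` eball y d) !=set0.
  by exists y1; [exact: walk_refl | exists x1].
have [y y1y yx2] := connected_reach cO (fun y => @open_eball R y d) cover start step Ox2.
have [N [f [N_gt0 f0 fN f_nodes f_edges]]] := step _ _ _ y1y Yy2 Ox2 yx2 x2y2.
exists N, f; rewrite f0 fN (seg_sym y2 x2).
do 4!split => //; split; first by move=> i /f_edges [].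
by do 2!split => //; move=> i /f_edges [].
Qed.

End Zigzag.

Theorem lemma2p6 (R : realType) (Omega : set 'rV[R]_3) (d : R)
  (m1 m2 : nat)
  (x0 e1 e2 nn : 'I_m1 -> 'rV[R]_3) (phi : 'I_m1 -> R * R -> R)
  (z : 'I_m2 -> 'rV[R]_3) :
  (* Omega: connected bounded open set with C^2 boundary (the C^2 regularity
     is encoded by the local C^2 graph charts below, which cover dOmega) *)
  open Omega -> connected Omega -> bounded_set Omega ->
  0 < d -> d < 1 ->
  (forall i, bdry Omega (x0 i)) ->
  (forall x, bdry Omega x -> exists i, eball (x0 i) (d / 8) x) ->
  (* {e1, e2, -n} orthonormal *)
  (forall i, dot (e1 i) (e1 i) = 1 /\ dot (e2 i) (e2 i) = 1 /\
             dot (nn i) (nn i) = 1 /\ dot (e1 i) (e2 i) = 0 /\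
             dot (e1 i) (nn i) = 0 /\ dot (e2 i) (nn i) = 0) ->
  (forall i, C2 (phi i) /\ phi i (0, 0) = 0 /\
             pdx (phi i) (0, 0) = 0 /\ pdy (phi i) (0, 0) = 0 /\
             (forall p, Num.sqrt (pdx (phi i) p ^+ 2 + pdy (phi i) p ^+ 2)
                          < 1 / 100)) ->
  (* graph description in the closed (hence also open) ball B(x0 i, 3d) *)
  (forall i (w : 'rV[R]_3), enorm (w - x0 i) <= 3 * d ->
     let u1 := dot (w - x0 i) (e1 i) in
     let u2 := dot (w - x0 i) (e2 i) in
     let u3 := dot (w - x0 i) (- nn i) in
     (bdry Omega w <-> u3 = phi i (u1, u2)) /\
     (Omega w <-> u3 > phi i (u1, u2))) ->
  (forall i, eball (x0 i - (d / 2) *: nn i) (d / 2) `<=`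
             eball (x0 i) d `&` Omega) ->
  (* z: centres of a minimal finite subcover of {B(x, d/16)}, x in Omega \ Omega_{d/8} *)
  (forall j, (Omega `\` collar Omega (d / 8)) (z j)) ->
  (Omega `\` collar Omega (d / 8) `<=` \bigcup_(j in [set: 'I_m2]) eball (z j) (d / 16)) ->
  (forall (k : nat) (w : 'I_k -> 'rV[R]_3),
     (forall j, (Omega `\` collar Omega (d / 8)) (w j)) ->
     (Omega `\` collar Omega (d / 8) `<=` \bigcup_(j in [set: 'I_k]) eball (w j) (d / 16)) ->
     (m2 <= k)%N) ->
  let Y := [set y | (exists i, y = x0 i - (3 * d / 4) *: nn i) \/
                    (exists j, y = z j)] in
  forall x1 x2, Omega x1 -> Omega x2 ->
  exists (N : nat) (y : nat -> 'rV[R]_3),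
    (0 < N)%N /\
    (forall i, (i < N)%N -> Y (y i)) /\
    seg x1 (y 0%N) `<=` Omega /\
    seg (y N.-1) x2 `<=` Omega /\
    (forall i, (i.+1 < N)%N -> seg (y i) (y i.+1) `<=` Omega) /\
    dist_set (seg x1 (y 0%N)) (bdry Omega) >= Num.min (dist_pt x1 (bdry Omega)) (d / 10) /\
    dist_set (seg (y N.-1) x2) (bdry Omega) >= Num.min (dist_pt x2 (bdry Omega)) (d / 10) /\
    (forall i, (i.+1 < N)%N -> dist_set (seg (y i) (y i.+1)) (bdry Omega) > d / 10).
Proof.
move=> oO cO bO d_gt0 _ _ bdry_cover frame phi_reg chart inner_ball z_in z_cover _
  Y x1 x2 Ox1 Ox2.
have phi_lip i (a b : R * R) :
    `|phi i a - phi i b| <= 1 / 100 * (`|a.1 - b.1| + `|a.2 - b.2|).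
  have [[[_ [dphi _]] _] [_ [_ [_ grad]]]] := phi_reg i.
  by apply: lipschitz_partials dphi _ a b => p; exact/ltW/grad.
have bdry_n0 := bdry_nonempty oO bO (ex_intro _ x1 Ox1).
exact: zigzag oO d_gt0 bdry_n0 bdry_cover frame phi_lip chart inner_ball z_in z_cover
  x1 x2 cO Ox1 Ox2.
Qed.
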